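(* Let the alphabet be countable, $\mu$ a probability on sentences, and $\varphi$ a formula having a single free variable $x$ of type $\alpha$. Let $t_1,t_2,\dots$ be an enumeration of all closed terms of type $\alpha$. Then (1) $\sup_{\{s_1,\dots,s_n\}}\mu(\bigvee_{i=1}^n\varphi\{x/s_i\})=\lim_{n\to\infty}\mu(\bigvee_{i=1}^n\varphi\{x/t_i\})$, and (2) $\inf_{\{s_1,\dots,s_n\}}\mu(\bigwedge_{i=1}^n\varphi\{x/s_i\})=\lim_{n\to\infty}\mu(\bigwedge_{i=1}^n\varphi\{x/t_i\})$, where on the left-hand sides $\{s_1,\dots,s_n\}$ ranges over all finite sets of closed terms of type $\alpha$.
   Context: Setting: higher-order logic (Church's simple theory of types), with Henkin semantics; an alphabet is countable if its set of constants is countable. Formulas are terms of type $o$, sentences closed formulas; $\mathcal S$ is the set of sentences; $\varphi\{x/t\}$ denotes substitution of $t$ for the free occurrences of $x$. A sentence is valid if true in every interpretation. A probability on sentences is a non-negative $\mu:\mathcal S\to\mathbb R$ with $\mu(\varphi)=1$ for valid $\varphi$ and $\mu(\varphi\vee\psi)=\mu(\varphi)+\mu(\psi)$ whenever $\neg(\varphi\wedge\psi)$ is valid. *)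

From Stdlib Require Import Reals List ClassicalEpsilon.
Import ListNotations.
Open Scope R_scope.

Set Implicit Arguments.

(** Simple types over a set [B] of base types; [TyO] is the type o of truth values. *)
Inductive ty (B : Type) : Type :=
| TyBase : B -> ty B
| TyO : ty B
| TyArr : ty B -> ty B -> ty B.
Arguments TyO {B}.

(** Raw terms (Church style: variables are pairs (name, type)).
    [C] is the set of (non-logical) constants of the alphabet. *)
Inductive term (B C : Type) : Type :=
| TmVar : nat -> ty B -> term B C
| TmCon : C -> term B C
| TmApp : term B C -> term B C -> term B C
| TmAbs : nat -> ty B -> term B C -> term B C
| TmNot : term B C -> term B C
| TmAnd : term B C -> term B C -> term B C
| TmOr  : term B C -> term B C -> term B C
| TmAll : nat -> ty B -> term B C -> term B C
| TmEx  : nat -> ty B -> term B C -> term B C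
| TmEq  : term B C -> term B C -> term B C.
Arguments TmCon {B C}.

Section Syntax.
Variables (B C : Type) (ctype : C -> ty B).

Inductive has_type : term B C -> ty B -> Prop :=
| HT_Var : forall y b, has_type (TmVar C y b) b
| HT_Con : forall c, has_type (TmCon c) (ctype c)
| HT_App : forall t u a b, has_type t (TyArr a b) -> has_type u a ->
    has_type (TmApp t u) b
| HT_Abs : forall y a t b, has_type t b -> has_type (TmAbs y a t) (TyArr a b)
| HT_Not : forall t, has_type t TyO -> has_type (TmNot t) TyO
| HT_And : forall t u, has_type t TyO -> has_type u TyO -> has_type (TmAnd t u) TyO
| HT_Or  : forall t u, has_type t TyO -> has_type u TyO -> has_type (TmOr t u) TyO
| HT_All : forall y a t, has_type t TyO -> has_type (TmAll y a t) TyO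
| HT_Ex  : forall y a t, has_type t TyO -> has_type (TmEx y a t) TyO
| HT_Eq  : forall t u a, has_type t a -> has_type u a -> has_type (TmEq t u) TyO.

Fixpoint free_in (x : nat) (a : ty B) (t : term B C) : Prop :=
  match t with
  | TmVar _ y b => x = y /\ a = b
  | TmCon _ => False
  | TmApp t u => free_in x a t \/ free_in x a u
  | TmAbs y b t => ~ (x = y /\ a = b) /\ free_in x a t
  | TmNot t => free_in x a t
  | TmAnd t u => free_in x a t \/ free_in x a u
  | TmOr t u => free_in x a t \/ free_in x a u
  | TmAll y b t => ~ (x = y /\ a = b) /\ free_in x a t
  | TmEx y b t => ~ (x = y /\ a = b) /\ free_in x a t
  | TmEq t u => free_in x a t \/ free_in x a u
  end.

Definition closed (t : term B C) : Prop := forall x a, ~ free_in x a t.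

Definition closed_term_of (t : term B C) (a : ty B) : Prop :=
  has_type t a /\ closed t.

Definition sentence (t : term B C) : Prop := closed_term_of t TyO.

(** Substitution [subst x a s t] = t{(x:a)/s} of s for the free occurrences of
    the variable (x : a) in t (used with closed s, so no capture can occur). *)
Definition vdec (x : nat) (a : ty B) (y : nat) (b : ty B) : bool :=
  if excluded_middle_informative (x = y /\ a = b) then true else false.

Fixpoint subst (x : nat) (a : ty B) (s : term B C) (t : term B C) : term B C :=
  match t with
  | TmVar _ y b => if vdec x a y b then s else TmVar C y b
  | TmCon c => TmCon c
  | TmApp t u => TmApp (subst x a s t) (subst x a s u)
  | TmAbs y b t => if vdec x a y b then TmAbs y b t else TmAbs y b (subst x a s t)
  | TmNot t => TmNot (subst x a s t)
  | TmAnd t u => TmAnd (subst x a s t) (subst x a s u)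
  | TmOr t u => TmOr (subst x a s t) (subst x a s u)
  | TmAll y b t => if vdec x a y b then TmAll y b t else TmAll y b (subst x a s t)
  | TmEx y b t => if vdec x a y b then TmEx y b t else TmEx y b (subst x a s t)
  | TmEq t u => TmEq (subst x a s t) (subst x a s u)
  end.

Definition big_or (t0 : term B C) (l : list (term B C)) : term B C :=
  fold_left (fun acc u => TmOr acc u) l t0.
Definition big_and (t0 : term B C) (l : list (term B C)) : term B C :=
  fold_left (fun acc u => TmAnd acc u) l t0.

Definition upd (U : Type) (rho : nat -> ty B -> U) (y : nat) (b : ty B) (u : U)
  : nat -> ty B -> U :=
  fun z c => if vdec y b z c then u else rho z c.

(** Henkin interpretations (general models), presented single-sorted:
    [D a] is the domain of type [a] inside a carrier [U], [app] is application,
    [vT]/[vF] are the truth values, [I] interprets constants, and [ev] is the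
    (required-to-exist) evaluation of terms under assignments. *)
Record interp : Type := {
  U : Type;
  D : ty B -> U -> Prop;
  app : U -> U -> U;
  vT : U;
  vF : U;
  I : C -> U;
  ev : (nat -> ty B -> U) -> term B C -> U;
  TF_neq : vT <> vF;
  D_o : forall u, D TyO u <-> (u = vT \/ u = vF);
  D_nonempty : forall a, exists u, D a u;
  D_app : forall a b f u, D (TyArr a b) f -> D a u -> D b (app f u);
  D_ext : forall a b f g, D (TyArr a b) f -> D (TyArr a b) g ->
            (forall u, D a u -> app f u = app g u) -> f = g;
  I_typed : forall c, D (ctype c) (I c);
  ev_typed : forall rho t a, (forall y b, D b (rho y b)) ->
            has_type t a -> D a (ev rho t);
  ev_var : forall rho y b, ev rho (TmVar C y b) = rho y b;
  ev_con : forall rho c, ev rho (TmCon c) = I c;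
  ev_app : forall rho t u, ev rho (TmApp t u) = app (ev rho t) (ev rho u);
  ev_abs : forall rho y b t c u, (forall z d, D d (rho z d)) -> has_type t c ->
            D b u -> app (ev rho (TmAbs y b t)) u = ev (upd rho y b u) t;
  ev_not : forall rho t, (forall z d, D d (rho z d)) -> has_type t TyO ->
            (ev rho (TmNot t) = vT <-> ev rho t = vF);
  ev_and : forall rho t u, (forall z d, D d (rho z d)) -> has_type t TyO ->
            has_type u TyO ->
            (ev rho (TmAnd t u) = vT <-> (ev rho t = vT /\ ev rho u = vT));
  ev_or : forall rho t u, (forall z d, D d (rho z d)) -> has_type t TyO ->
            has_type u TyO ->
            (ev rho (TmOr t u) = vT <-> (ev rho t = vT \/ ev rho u = vT));
  ev_all : forall rho y b t, (forall z d, D d (rho z d)) -> has_type t TyO ->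
            (ev rho (TmAll y b t) = vT <->
             (forall u, D b u -> ev (upd rho y b u) t = vT));
  ev_ex : forall rho y b t, (forall z d, D d (rho z d)) -> has_type t TyO ->
            (ev rho (TmEx y b t) = vT <->
             (exists u, D b u /\ ev (upd rho y b u) t = vT));
  ev_eq : forall rho t u a, (forall z d, D d (rho z d)) -> has_type t a ->
            has_type u a -> (ev rho (TmEq t u) = vT <-> ev rho t = ev rho u)
}.

Definition true_in (M : interp) (phi : term B C) : Prop :=
  forall rho : nat -> ty B -> U M, (forall z d, D M d (rho z d)) ->
    ev M rho phi = vT M.

Definition valid (phi : term B C) : Prop := forall M : interp, true_in M phi.

(** Probability on sentences (values of [mu] off sentences are irrelevant). *)
Definition probability (mu : term B C -> R) : Prop :=
  (forall phi, sentence phi -> 0 <= mu phi) /\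
  (forall phi, sentence phi -> valid phi -> mu phi = 1) /\
  (forall phi psi, sentence phi -> sentence psi -> valid (TmNot (TmAnd phi psi)) ->
     mu (TmOr phi psi) = mu phi + mu psi).

End Syntax.

(** Countable alphabet: countably many constants. *)
Definition countable (T : Type) : Prop :=
  exists f : T -> nat, forall a b, f a = f b -> a = b.

Definition is_glb (E : R -> Prop) (l : R) : Prop :=
  (forall r, E r -> l <= r) /\ (forall m, (forall r, E r -> m <= r) -> m <= l).

(* Adding instances to a disjunction (removing them from a conjunction) weakens it, and a
   probability is monotone under entailment, so along the enumeration the disjunctions of the
   first n instances increase and the conjunctions decrease; both sequences are bounded and
   hence converge.  Every finite set of closed terms lies in an initial segment of the
   enumeration, so each sequence is cofinal in the corresponding set of values, which makes
   its limit the supremum, resp. infimum, of that set. *)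

From Stdlib Require Import Reals List Lra Lia ClassicalEpsilon.
Open Scope R_scope.
Set Implicit Arguments.

Lemma Un_cv_const (c : R) : Un_cv (fun _ => c) c.
Proof.
  intros eps Heps; exists 0%nat; intros n _.
  unfold R_dist; rewrite Rminus_diag, Rabs_R0; exact Heps.
Qed.

Lemma is_lub_Un_cv_cofinal (E : R -> Prop) (a : nat -> R) (M : R) :
  Un_growing a -> (forall n, E (a n)) -> (forall r, E r -> exists n, r <= a n) ->
  (forall r, E r -> r <= M) -> exists L, is_lub E L /\ Un_cv a L.
Proof.
  intros Ha HEa Hcofinal HM.
  assert (bounded : has_ub a) by (exists M; intros r [n ->]; apply HM, HEa).
  destruct (growing_cv a Ha bounded) as [L HL]; exists L; split; [split|exact HL].
  - intros r Er; destruct (Hcofinal r Er) as [n Hn].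
    pose proof (growing_ineq a L Ha HL n); lra.
  - intros b Hb; exact (Rle_cv_lim (fun n => Hb _ (HEa n)) HL (Un_cv_const b)).
Qed.

Lemma is_glb_Un_cv_cofinal (E : R -> Prop) (a : nat -> R) (m : R) :
  Un_decreasing a -> (forall n, E (a n)) -> (forall r, E r -> exists n, a n <= r) ->
  (forall r, E r -> m <= r) -> exists L, is_glb E L /\ Un_cv a L.
Proof.
  intros Ha HEa Hcofinal Hm.
  assert (bounded : has_lb a).
  { exists (- m); intros r [n ->]; unfold opp_seq; specialize (Hm _ (HEa n)); lra. }
  destruct (decreasing_cv a Ha bounded) as [L HL]; exists L; split; [split|exact HL].
  - intros r Er; destruct (Hcofinal r Er) as [n Hn].
    pose proof (decreasing_ineq a L Ha HL n); lra.
  - intros b Hb; exact (Rle_cv_lim (fun n => Hb _ (HEa n)) (Un_cv_const b) HL).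
Qed.

Lemma fold_left_invariant (A : Type) (P : A -> Prop) (op : A -> A -> A) (l : list A) (a0 : A) :
  (forall p q, P p -> P q -> P (op p q)) -> P a0 -> (forall u, In u l -> P u) ->
  P (fold_left op l a0).
Proof.
  intros Hop; revert a0; induction l as [|a l IH]; intros a0 H0 Hl; simpl; auto.
  apply IH.
  - apply Hop; [exact H0 | apply Hl; left; reflexivity].
  - intros u Hu; apply Hl; right; exact Hu.
Qed.

Lemma incl_seq_le (m n : nat) : (m <= n)%nat -> incl (seq 0 m) (seq 0 n).
Proof. intros Hmn i; rewrite !in_seq; lia. Qed.

Lemma range_incl_prefix (T : Type) (t : nat -> T) (l : list T) :
  (forall s, In s l -> exists i, t i = s) ->
  exists N, forall n, (N <= n)%nat -> incl l (map t (seq 0 n)).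
Proof.
  induction l as [|s l IH]; intros Hl.
  - exists 0%nat; intros n _ u [].
  - destruct (Hl s (or_introl eq_refl)) as [i <-].
    destruct IH as [N HN]; [intros u Hu; apply Hl; right; exact Hu|].
    exists (Nat.max (S i) N); intros n Hn u [<-|Hu].
    + apply in_map, in_seq; lia.
    + apply (HN n); [lia | exact Hu].
Qed.

Section Semantics.
Variables (B C : Type) (ctype : C -> ty B).

Definition entails (p q : term B C) : Prop :=
  forall (M : interp ctype) rho, (forall z d, D M d (rho z d)) ->
    ev M rho p = vT M -> ev M rho q = vT M.

Lemma ev_formula_cases (M : interp ctype) rho p : (forall z d, D M d (rho z d)) ->
  has_type ctype p TyO -> ev M rho p = vT M \/ ev M rho p = vF M.
Proof. intros Hrho Hp; apply (D_o M), (ev_typed M); auto. Qed.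

Lemma sentence_not p : sentence ctype p -> sentence ctype (TmNot p).
Proof. intros [Hp Cp]; split; [constructor; exact Hp | exact Cp]. Qed.

Lemma sentence_or p q : sentence ctype p -> sentence ctype q -> sentence ctype (TmOr p q).
Proof.
  intros [Hp Cp] [Hq Cq]; split; [constructor; auto|].
  intros y b [H|H]; [exact (Cp y b H) | exact (Cq y b H)].
Qed.

Lemma sentence_and p q : sentence ctype p -> sentence ctype q -> sentence ctype (TmAnd p q).
Proof.
  intros [Hp Cp] [Hq Cq]; split; [constructor; auto|].
  intros y b [H|H]; [exact (Cp y b H) | exact (Cq y b H)].
Qed.

Lemma sentence_big_or p l : (forall u, In u (p :: l) -> sentence ctype u) ->
  sentence ctype (big_or p l).
Proof.
  intros Hl; unfold big_or; apply fold_left_invariant; [exact sentence_or | apply Hl; left; reflexivity |].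
  intros u Hu; apply Hl; right; exact Hu.
Qed.

Lemma sentence_big_and p l : (forall u, In u (p :: l) -> sentence ctype u) ->
  sentence ctype (big_and p l).
Proof.
  intros Hl; unfold big_and; apply fold_left_invariant; [exact sentence_and | apply Hl; left; reflexivity |].
  intros u Hu; apply Hl; right; exact Hu.
Qed.

Section Evaluation.
Variables (M : interp ctype) (rho : nat -> ty B -> U M).
Hypothesis Hrho : forall z d, D M d (rho z d).

Lemma ev_big_or p l : (forall u, In u (p :: l) -> has_type ctype u TyO) ->
  ev M rho (big_or p l) = vT M <-> exists u, In u (p :: l) /\ ev M rho u = vT M.
Proof.
  revert p; induction l as [|a l IH]; intros p Hl.
  - split; [intros H; exists p; split; [left|]; auto | intros [u [[<-|[]] Hu]]; exact Hu].
  - assert (Hp : has_type ctype p TyO) by (apply Hl; left; reflexivity).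
    assert (Ha : has_type ctype a TyO) by (apply Hl; right; left; reflexivity).
    change (big_or p (a :: l)) with (big_or (TmOr p a) l).
    rewrite IH by (intros u [<-|Hu]; [constructor; auto | apply Hl; right; right; exact Hu]).
    split; intros [u [Hu Hev]].
    + destruct Hu as [<-|Hu]; [|exists u; split; [right; right|]; auto].
      apply (ev_or M) in Hev; auto.
      destruct Hev; [exists p | exists a]; split; simpl; auto.
    + destruct Hu as [Hu|[Hu|Hu]]; [subst u..|exists u; split; [right|]; auto];
        exists (TmOr p a); split; try (left; reflexivity); apply (ev_or M); auto.
Qed.

Lemma ev_big_and p l : (forall u, In u (p :: l) -> has_type ctype u TyO) ->
  ev M rho (big_and p l) = vT M <-> forall u, In u (p :: l) -> ev M rho u = vT M.
Proof.
  revert p; induction l as [|a l IH]; intros p Hl.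
  - split; [intros H u [<-|[]]; exact H | intros H; apply H; left; reflexivity].
  - assert (Hp : has_type ctype p TyO) by (apply Hl; left; reflexivity).
    assert (Ha : has_type ctype a TyO) by (apply Hl; right; left; reflexivity).
    change (big_and p (a :: l)) with (big_and (TmAnd p a) l).
    rewrite IH by (intros u [<-|Hu]; [constructor; auto | apply Hl; right; right; exact Hu]).
    split; intros H.
    + assert (Hpa : ev M rho (TmAnd p a) = vT M) by (apply H; left; reflexivity).
      apply (ev_and M) in Hpa; auto; destruct Hpa as [Hevp Heva].
      intros u [<-|[<-|Hu]]; auto; apply H; right; exact Hu.
    + intros u [<-|Hu]; [apply (ev_and M); auto; split; apply H; simpl; auto|].
      apply H; right; right; exact Hu.
Qed.
End Evaluation.

Lemma big_or_entails_incl p l q l' :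
  (forall u, In u (p :: l) -> has_type ctype u TyO) ->
  (forall u, In u (q :: l') -> has_type ctype u TyO) ->
  incl (p :: l) (q :: l') -> entails (big_or p l) (big_or q l').
Proof.
  intros Hl Hl' Hincl M rho Hrho.
  rewrite !ev_big_or by assumption.
  intros [u [Hu Hev]]; exists u; split; [apply Hincl|]; assumption.
Qed.

Lemma big_and_entails_incl p l q l' :
  (forall u, In u (p :: l) -> has_type ctype u TyO) ->
  (forall u, In u (q :: l') -> has_type ctype u TyO) ->
  incl (q :: l') (p :: l) -> entails (big_and p l) (big_and q l').
Proof.
  intros Hl Hl' Hincl M rho Hrho.
  rewrite !ev_big_and by assumption.
  intros Hev u Hu; apply Hev, Hincl, Hu.
Qed.

Lemma valid_not_and p q : has_type ctype p TyO -> has_type ctype q TyO ->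
  (forall (M : interp ctype) rho, (forall z d, D M d (rho z d)) ->
     ev M rho p = vT M -> ev M rho q = vT M -> False) ->
  valid ctype (TmNot (TmAnd p q)).
Proof.
  intros Hp Hq Hexcl M rho Hrho.
  assert (Hpq : has_type ctype (TmAnd p q) TyO) by (constructor; assumption).
  apply (ev_not M); auto.
  destruct (ev_formula_cases M rho Hrho Hpq) as [Hev|Hev]; [|exact Hev].
  apply (ev_and M) in Hev; auto; destruct Hev as [Hevp Hevq].
  destruct (Hexcl M rho Hrho Hevp Hevq).
Qed.

Section Probability.
Variable mu : term B C -> R.
Hypothesis Hmu : probability ctype mu.

Lemma probability_nonneg p : sentence ctype p -> 0 <= mu p.
Proof. apply Hmu. Qed.

Lemma probability_add_not p : sentence ctype p -> mu p + mu (TmNot p) = 1.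
Proof.
  intros Hp; destruct Hmu as (_ & Hvalid & Hadd).
  pose proof (proj1 Hp) as Hpt.
  rewrite <- (Hadd p (TmNot p)); auto using sentence_not.
  - apply Hvalid; [apply sentence_or; auto using sentence_not|].
    intros M rho Hrho; apply (ev_or M); auto; [constructor; auto|].
    destruct (ev_formula_cases M rho Hrho Hpt) as [Hev|Hev]; [left|right]; auto.
    apply (ev_not M); auto.
  - apply valid_not_and; [auto | constructor; auto|].
    intros M rho Hrho Hev Hevn; apply (ev_not M) in Hevn; auto.
    apply (TF_neq M); congruence.
Qed.

Lemma probability_le_1 p : sentence ctype p -> mu p <= 1.
Proof.
  intros Hp; pose proof (probability_add_not Hp).
  pose proof (probability_nonneg (sentence_not Hp)); lra.
Qed.

(* mu p + mu (not q) = mu (p or not q) <= 1 = mu q + mu (not q). *)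
Lemma probability_mono p q : sentence ctype p -> sentence ctype q -> entails p q ->
  mu p <= mu q.
Proof.
  intros Hp Hq Hpq.
  assert (Hdisj : mu (TmOr p (TmNot q)) = mu p + mu (TmNot q)).
  { apply Hmu; auto using sentence_not.
    apply valid_not_and; [apply Hp | constructor; apply Hq|].
    intros M rho Hrho Hev Hevn; apply (ev_not M) in Hevn; [|auto | apply Hq].
    apply (TF_neq M); rewrite <- Hevn; symmetry; exact (Hpq M rho Hrho Hev). }
  pose proof (probability_le_1 (sentence_or Hp (sentence_not Hq))).
  pose proof (probability_add_not Hq); lra.
Qed.

Lemma probability_big_or_incl p l q l' :
  (forall u, In u (p :: l) -> sentence ctype u) ->
  (forall u, In u (q :: l') -> sentence ctype u) ->
  incl (p :: l) (q :: l') -> mu (big_or p l) <= mu (big_or q l').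
Proof.
  intros Hl Hl' Hincl.
  apply probability_mono; [apply sentence_big_or, Hl | apply sentence_big_or, Hl' |].
  apply big_or_entails_incl; [intros u Hu; apply Hl, Hu | intros u Hu; apply Hl', Hu | exact Hincl].
Qed.

Lemma probability_big_and_incl p l q l' :
  (forall u, In u (p :: l) -> sentence ctype u) ->
  (forall u, In u (q :: l') -> sentence ctype u) ->
  incl (q :: l') (p :: l) -> mu (big_and p l) <= mu (big_and q l').
Proof.
  intros Hl Hl' Hincl.
  apply probability_mono; [apply sentence_big_and, Hl | apply sentence_big_and, Hl' |].
  apply big_and_entails_incl; [intros u Hu; apply Hl, Hu | intros u Hu; apply Hl', Hu | exact Hincl].
Qed.
End Probability.
End Semantics.

Section Substitution.
Variables (B C : Type) (x : nat) (a : ty B) (s : term B C).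

Lemma has_type_subst (ctype : C -> ty B) : has_type ctype s a ->
  forall t b, has_type ctype t b -> has_type ctype (subst x a s t) b.
Proof.
  intros Hs t b Ht; induction Ht; simpl; unfold vdec;
  repeat match goal with |- context [excluded_middle_informative ?P] =>
    destruct (excluded_middle_informative P) as [[<- <-]|] end;
  first [assumption | econstructor; eauto].
Qed.

Lemma free_in_subst : closed s ->
  forall t y b, free_in y b (subst x a s t) -> free_in y b t /\ ~ (y = x /\ b = a).
Proof.
  intros Hs t; induction t; simpl; intros y b Hfree; unfold vdec in *;
  repeat match goal with H : context [excluded_middle_informative ?P] |- _ =>
    destruct (excluded_middle_informative P) as [[<- <-]|] end; simpl in *;
  try solve [destruct (Hs y b Hfree) | tauto];
  repeat match goal with
  | H : _ /\ _ |- _ => destruct H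
  | H : _ \/ _ |- _ => destruct H
  | IH : forall y b, free_in y b (subst x a s ?u) -> _, H : free_in _ _ (subst x a s ?u) |- _ =>
      apply IH in H
  end; (split; [tauto | intros [? ?]; subst; tauto]).
Qed.
End Substitution.

Section Instances.
Variables (B C : Type) (ctype : C -> ty B) (phi : term B C) (x : nat) (alpha : ty B).
Hypothesis Hphi : has_type ctype phi TyO.
Hypothesis Hfree : forall y b, free_in y b phi <-> (y = x /\ b = alpha).

Local Notation inst s := (subst x alpha s phi).

Lemma sentence_subst s : closed_term_of ctype s alpha -> sentence ctype (inst s).
Proof.
  intros [Hs Cs]; split; [apply has_type_subst; assumption|].
  intros y b Hyb; apply free_in_subst in Hyb; [|assumption].
  destruct Hyb as [Hyb Hne]; apply Hfree in Hyb; contradiction.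
Qed.

Lemma sentences_map_subst l : (forall s, In s l -> closed_term_of ctype s alpha) ->
  forall u, In u (map (fun s => inst s) l) -> sentence ctype u.
Proof.
  intros Hl u Hu; apply in_map_iff in Hu; destruct Hu as [s [<- Hs]].
  apply sentence_subst, Hl, Hs.
Qed.

Variable t : nat -> term B C.
Hypothesis Ht : forall i, closed_term_of ctype (t i) alpha.
Hypothesis Henum : forall s, closed_term_of ctype s alpha -> exists i, t i = s.

Lemma closed_map_seq n s : In s (map t (seq 0 n)) -> closed_term_of ctype s alpha.
Proof. intros Hs; apply in_map_iff in Hs; destruct Hs as [i [<- _]]; apply Ht. Qed.

Lemma sentences_map_seq_subst n u :
  In u (map (fun i => inst (t i)) (seq 0 n)) -> sentence ctype u.
Proof. intros Hu; apply in_map_iff in Hu; destruct Hu as [i [<- _]]; apply sentence_subst, Ht. Qed.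

Lemma incl_map_seq_subst m n : (m <= n)%nat ->
  incl (map (fun i => inst (t i)) (seq 0 m)) (map (fun i => inst (t i)) (seq 0 n)).
Proof. intros Hmn; apply incl_map, incl_seq_le, Hmn. Qed.

Lemma incl_map_subst_enum l : (forall s, In s l -> closed_term_of ctype s alpha) ->
  exists N, incl (map (fun s => inst s) l) (map (fun i => inst (t i)) (seq 0 (S N))).
Proof.
  intros Hl; destruct (range_incl_prefix t l) as [N HN].
  - intros s Hs; apply Henum, Hl, Hs.
  - exists N; rewrite <- (map_map t (fun s => inst s)); apply incl_map, HN; lia.
Qed.

End Instances.

Theorem mainTheorem8 (B C : Type) (ctype : C -> ty B)
  (Hcount : countable C)
  (mu : term B C -> R) (Hmu : probability ctype mu)
  (phi : term B C) (x : nat) (alpha : ty B)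
  (Hphi : has_type ctype phi TyO)
  (Hfree : forall y b, free_in y b phi <-> (y = x /\ b = alpha))
  (t : nat -> term B C)
  (Ht : forall i, closed_term_of ctype (t i) alpha)
  (Henum : forall s, closed_term_of ctype s alpha -> exists i, t i = s) :
  (exists L,
     is_lub (fun r => exists (s0 : term B C) (ss : list (term B C)),
               (forall s, In s (s0 :: ss) -> closed_term_of ctype s alpha) /\
               r = mu (big_or (subst x alpha s0 phi)
                              (map (fun s => subst x alpha s phi) ss))) L /\
     Un_cv (fun n => mu (big_or (subst x alpha (t 0%nat) phi)
                          (map (fun i => subst x alpha (t i) phi) (seq 1 n)))) L) /\
  (exists L,
     is_glb (fun r => exists (s0 : term B C) (ss : list (term B C)),
               (forall s, In s (s0 :: ss) -> closed_term_of ctype s alpha) /\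
               r = mu (big_and (subst x alpha s0 phi)
                               (map (fun s => subst x alpha s phi) ss))) L /\
     Un_cv (fun n => mu (big_and (subst x alpha (t 0%nat) phi)
                          (map (fun i => subst x alpha (t i) phi) (seq 1 n)))) L).
Proof.
  (* The countability of [C] is only needed for the enumeration [t] to exist. *)
  clear Hcount.
  assert (Hsent := sentences_map_seq_subst Hphi Hfree t Ht).
  assert (Hinst := sentences_map_subst Hphi Hfree).
  assert (Hincl := incl_map_seq_subst phi x alpha t).
  assert (Hcofinal := incl_map_subst_enum phi x t Henum).
  split.
  - apply is_lub_Un_cv_cofinal with (M := 1).
    + intros n; apply (probability_big_or_incl Hmu);
        [exact (Hsent (S n)) | exact (Hsent (S (S n))) | apply (Hincl (S n) (S (S n))); lia].
    + intros n; exists (t 0%nat), (map t (seq 1 n)); split;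
        [exact (closed_map_seq t Ht (S n)) | rewrite map_map; reflexivity].
    + intros r (s0 & ss & Hc & ->); destruct (Hcofinal _ Hc) as [N HN]; exists N.
      apply (probability_big_or_incl Hmu);
        [exact (Hinst _ Hc) | exact (Hsent (S N)) | exact HN].
    + intros r (s0 & ss & Hc & ->).
      apply (probability_le_1 Hmu), sentence_big_or, (Hinst _ Hc).
  - apply is_glb_Un_cv_cofinal with (m := 0).
    + intros n; apply (probability_big_and_incl Hmu);
        [exact (Hsent (S (S n))) | exact (Hsent (S n)) | apply (Hincl (S n) (S (S n))); lia].
    + intros n; exists (t 0%nat), (map t (seq 1 n)); split;
        [exact (closed_map_seq t Ht (S n)) | rewrite map_map; reflexivity].
    + intros r (s0 & ss & Hc & ->); destruct (Hcofinal _ Hc) as [N HN]; exists N.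
      apply (probability_big_and_incl Hmu);
        [exact (Hsent (S N)) | exact (Hinst _ Hc) | exact HN].
    + intros r (s0 & ss & Hc & ->).
      apply (probability_nonneg Hmu), sentence_big_and, (Hinst _ Hc).
Qed.
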